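(* Let $A\in\mathbb{R}^{n\times n}$ be a singular positive semi-definite matrix with $\mathrm{rank}(A)=d<n$, and let $u_0\notin\mathrm{range}(A)$. Then for any $\lambda_0>0$, $u_0^\intercal(\lambda_0u_0u_0^\intercal+A)^\dagger u_0=1/\lambda_0$.
   Context: $A^\dagger$ is the Moore–Penrose pseudo-inverse; $\mathrm{range}(A)$ is the column space of $A$. *)

From HB Require Import structures.
From mathcomp Require Import all_boot all_order all_algebra.
From mathcomp Require Import reals.
From Stdlib Require Import ClassicalEpsilon.
Set Implicit Arguments. Unset Strict Implicit. Unset Printing Implicit Defensive.
Import Order.TTheory GRing.Theory Num.Theory.
Local Open Scope ring_scope.

Definition psd (R : realType) (n : nat) (A : 'M[R]_n) : Prop :=
  A^T = A /\ forall x : 'cV[R]_n, 0 <= (x^T *m A *m x) 0 0.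

Definition in_range (R : realType) (m n : nat) (A : 'M[R]_(m, n)) (u : 'cV[R]_m) : Prop :=
  exists x : 'cV[R]_n, A *m x = u.

Definition is_MP_pinv (R : realType) (m n : nat) (A : 'M[R]_(m, n)) (X : 'M[R]_(n, m)) : Prop :=
  [/\ A *m X *m A = A, X *m A *m X = X, (A *m X)^T = A *m X & (X *m A)^T = X *m A].

Definition mp_pinv (R : realType) (m n : nat) (A : 'M[R]_(m, n)) : 'M[R]_(n, m) :=
  epsilon (inhabits 0) (is_MP_pinv A).

From HB Require Import structures.
From mathcomp Require Import all_boot all_order all_algebra.
From mathcomp Require Import reals.
From Stdlib Require Import ClassicalEpsilon.
Set Implicit Arguments. Unset Strict Implicit. Unset Printing Implicit Defensive.
Import Order.TTheory GRing.Theory Num.Theory.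
Local Open Scope ring_scope.

(* Since [u0] is not in the range of the symmetric matrix [A], some [w] in the
   kernel of [A] has [u0^T w = s <> 0], and then [v := w / (l0 s)] solves
   [(l0 u0 u0^T + A) v = u0].  For any symmetric [M] with [M X M = M] and
   [u = M v] one has [u^T X u = v^T M X M v = v^T M v = v^T u], which here is
   [w^T u0 / (l0 s) = 1 / l0]. *)

Section RealField.
Variable R : realFieldType.

Lemma row_gram_eq0 q (v : 'rV[R]_q) : (v *m v^T == 0) = (v == 0).
Proof.
apply/idP/eqP => [/eqP vv0|->]; last by rewrite mul0mx.
have := congr1 (fun M : 'M[R]_1 => M 0 0) vv0; rewrite !mxE => /eqP.
under eq_bigr do rewrite mxE -expr2.
rewrite psumr_eq0 => [/allP sq0|i _]; last exact: sqr_ge0.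
apply/rowP => j; rewrite mxE.
by have := sq0 j (mem_index_enum j); rewrite sqrf_eq0 => /eqP.
Qed.

Lemma row_free_gram_unit p q (B : 'M[R]_(p, q)) :
  row_free B -> B *m B^T \in unitmx.
Proof.
move=> freeB; rewrite -row_free_unit; apply: inj_row_free => v vBB0.
have : (v *m B) *m (v *m B)^T = 0 by rewrite trmx_mul !mulmxA -(mulmxA v) vBB0 mul0mx.
by move/eqP; rewrite row_gram_eq0 mulmx_free_eq0 // => /eqP.
Qed.

(* Fredholm alternative; [(u^T <= A^T)%MS] says that [u] lies in the column
   space of [A]. *)
Lemma not_submx_coker m n (A : 'M[R]_(m, n)) (u : 'cV[R]_m) :
  ~~ (u^T <= A^T)%MS -> exists2 w : 'cV[R]_m, A^T *m w = 0 & u^T *m w != 0.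
Proof.
rewrite submxE => uC0; set C := cokermx A^T.
exists (C *m (u^T *m C)^T); first by rewrite mulmxA mulmx_coker mul0mx.
by rewrite mulmxA row_gram_eq0.
Qed.

End RealField.

Lemma quad_form_g_inverse (R : comPzRingType) n (M X : 'M[R]_n) (v : 'cV[R]_n) :
  M^T = M -> M *m X *m M = M ->
  (M *m v)^T *m X *m (M *m v) = v^T *m (M *m v).
Proof.
move=> symM MXM.
by rewrite trmx_mul symM !mulmxA -(mulmxA v^T M X) -(mulmxA v^T (M *m X) M) MXM.
Qed.

Lemma rank_one_update_solve (F : fieldType) n (A : 'M[F]_n) (u w : 'cV[F]_n) l :
  A *m w = 0 -> l * (u^T *m w) 0 0 != 0 ->
  (l *: (u *m u^T) + A) *m ((l * (u^T *m w) 0 0)^-1 *: w) = u.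
Proof.
set s := (u^T *m w) 0 0; have uws : u^T *m w = s%:M by rewrite [LHS]mx11_scalar.
move=> Aw0 ls0; rewrite -scalemxAr mulmxDl Aw0 addr0 -scalemxAl -mulmxA uws.
by rewrite mul_mx_scalar !scalerA -mulrA mulVf ?scale1r.
Qed.

Section Real.
Variable R : realType.

Lemma in_rangeP m n (A : 'M[R]_(m, n)) (u : 'cV[R]_m) :
  reflect (in_range A u) (u^T <= A^T)%MS.
Proof.
apply: (iffP submxP) => [[y uyA]|[x <-]]; last by exists x^T; rewrite trmx_mul.
by exists y^T; rewrite -[u]trmxK uyA trmx_mul trmxK.
Qed.

Lemma is_MP_pinv_full_rank_factor m n r (F : 'M[R]_(m, r)) (G : 'M[R]_(r, n)) :
  row_free G -> row_free F^T ->
  is_MP_pinv (F *m G) (G^T *m invmx (G *m G^T) *m invmx (F^T *m F) *m F^T).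
Proof.
move=> freeG freeFT.
have uG : G *m G^T \in unitmx by apply: row_free_gram_unit.
have uF : F^T *m F \in unitmx by rewrite -{2}[F]trmxK row_free_gram_unit.
set P := invmx (G *m G^T); set Q := invmx (F^T *m F).
have GP : G *m G^T *m P = 1%:M by rewrite mulmxV.
have QF : Q *m (F^T *m F) = 1%:M by rewrite mulVmx.
have symP : P^T = P by rewrite /P trmx_inv trmx_mul trmxK.
have symQ : Q^T = Q by rewrite /Q trmx_inv trmx_mul trmxK.
have AX : F *m G *m (G^T *m P *m Q *m F^T) = F *m Q *m F^T.
  by rewrite !mulmxA -(mulmxA F G) -(mulmxA F) GP mulmx1.
have XA : G^T *m P *m Q *m F^T *m (F *m G) = G^T *m P *m G.
  by rewrite !mulmxA -(mulmxA (G^T *m P *m Q)) -(mulmxA (G^T *m P) Q) QF mulmx1.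
split.
- by rewrite AX !mulmxA -(mulmxA (F *m Q)) -(mulmxA F Q) QF mulmx1.
- by rewrite XA !mulmxA -(mulmxA (G^T *m P) G) -(mulmxA (G^T *m P) _ P) GP mulmx1.
- by rewrite AX !trmx_mul trmxK symQ mulmxA.
- by rewrite XA !trmx_mul trmxK symP mulmxA.
Qed.

Lemma mp_pinvP m n (A : 'M[R]_(m, n)) : is_MP_pinv A (mp_pinv A).
Proof.
apply: epsilon_spec; rewrite -(mulmx_base A).
eexists; apply: is_MP_pinv_full_rank_factor; first exact: row_base_free.
by rewrite /row_free mxrank_tr; exact: col_base_full.
Qed.

End Real.

Theorem lemma10 (R : realType) (n d : nat) (A : 'M[R]_n) (u0 : 'cV[R]_n) (l0 : R)
  (hA : psd A) (hrank : \rank A = d) (hd : (d < n)%N)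
  (hu0 : ~ in_range A u0) (hl0 : 0 < l0) :
  u0^T *m mp_pinv (l0 *: (u0 *m u0^T) + A) *m u0 = (l0^-1)%:M.
Proof.
have [symA _] := hA.
set M := l0 *: (u0 *m u0^T) + A.
have symM : M^T = M by rewrite /M linearD /= linearZ /= trmx_mul trmxK symA.
have [MXM _ _ _] := mp_pinvP M.
have /not_submx_coker[w Aw0 uw0] : ~~ (u0^T <= A^T)%MS by apply/negP => /in_rangeP.
rewrite symA in Aw0.
set s := (u0^T *m w) 0 0; have uws : u0^T *m w = s%:M by rewrite [LHS]mx11_scalar.
have s0 : s != 0 by move: uw0; apply: contra_neq => s0; rewrite uws s0 raddf0.
have ls0 : l0 * s != 0 by rewrite mulf_neq0 // gt_eqF.
have Mv : M *m ((l0 * s)^-1 *: w) = u0 := rank_one_update_solve Aw0 ls0.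
have wu : w^T *m u0 = s%:M by rewrite -[u0]trmxK -trmx_mul uws tr_scalar_mx.
rewrite -[in LHS]Mv quad_form_g_inverse // Mv linearZ /= -scalemxAl wu.
by rewrite scale_scalar_mx invfM mulrAC -mulrA mulfV ?mulr1.
Qed.
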